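(* Let $\langle L,\leq\rangle$, $\langle K,\leq\rangle$ be complete lattices, $f:L\to K$ a surjective lattice morphism, and $O:L\to L$ an operator that respects $f$, with projection $O_f:K\to K$. If $O$ and $O_f$ are monotone, then $f(\mathrm{lfp}(O))=\mathrm{lfp}(O_f)$.
   Context: A lattice morphism satisfies $f(\bigvee X)=\bigvee f(X)$ and $f(\bigwedge X)=\bigwedge f(X)$ for all $X\subseteq L$. $O$ respects $f$ if $f(x)=f(y)$ implies $f(O(x))=f(O(y))$; $O_f$ is the unique operator on $K$ with $O_f\circ f=f\circ O$. $\mathrm{lfp}$ denotes the least fixpoint. *)

Record complete_lattice := CompleteLattice {
  carrier :> Type;
  le : carrier -> carrier -> Prop;
  le_refl : forall x, le x x;
  le_trans : forall x y z, le x y -> le y z -> le x z;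
  le_antisym : forall x y, le x y -> le y x -> x = y;
  sup : (carrier -> Prop) -> carrier;
  sup_ub : forall (X : carrier -> Prop) x, X x -> le x (sup X);
  sup_least : forall (X : carrier -> Prop) z,
      (forall x, X x -> le x z) -> le (sup X) z;
  inf : (carrier -> Prop) -> carrier;
  inf_lb : forall (X : carrier -> Prop) x, X x -> le (inf X) x;
  inf_greatest : forall (X : carrier -> Prop) z,
      (forall x, X x -> le z x) -> le z (inf X)
}.

Arguments le {c} _ _.
Arguments sup {c} _.
Arguments inf {c} _.

Definition image {L K : complete_lattice} (f : L -> K) (X : L -> Prop) : K -> Prop :=
  fun y => exists x, X x /\ f x = y.

Definition lattice_morphism {L K : complete_lattice} (f : L -> K) : Prop :=
  forall X : L -> Prop, f (sup X) = sup (image f X) /\ f (inf X) = inf (image f X).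

Definition surjective {A B : Type} (f : A -> B) : Prop := forall y, exists x, f x = y.

Definition monotone {L : complete_lattice} (O : L -> L) : Prop :=
  forall x y, le x y -> le (O x) (O y).

Definition respects {L K : complete_lattice} (O : L -> L) (f : L -> K) : Prop :=
  forall x y, f x = f y -> f (O x) = f (O y).

Definition is_projection {L K : complete_lattice} (O : L -> L) (f : L -> K)
  (Of : K -> K) : Prop :=
  forall x, Of (f x) = f (O x).

Definition is_lfp {L : complete_lattice} (O : L -> L) (x : L) : Prop :=
  O x = x /\ forall y, O y = y -> le x y.


(* The image f a is a fixpoint of O_f because O_f (f a) = f (O a) = f a.  For
   minimality, let y = O_f y and let d be the largest element of the fibre
   f^-1(y), which exists because f preserves sups and is surjective.  Then
   f (O d) = O_f (f d) = y, so O d lies in the fibre and O d <= d; hence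
   a <= d by Knaster-Tarski, and f a <= f d = y since f is monotone. *)

Section LeastFixpoint.

Variable L : complete_lattice.
Variable O : L -> L.
Hypothesis O_monotone : monotone O.

Lemma inf_prefixpoints_fixpoint :
  O (inf (fun x => le (O x) x)) = inf (fun x => le (O x) x).
Proof.
  set (m := inf (fun x => le (O x) x)).
  assert (Om_le_m : le (O m) m).
  { apply inf_greatest. intros x Ox_le_x.
    apply le_trans with (O x); [| exact Ox_le_x].
    apply O_monotone, inf_lb, Ox_le_x. }
  apply le_antisym; [exact Om_le_m |].
  apply inf_lb, O_monotone, Om_le_m.
Qed.

Lemma lfp_le_prefixpoint (a d : L) : is_lfp O a -> le (O d) d -> le a d.
Proof.
  intros [_ a_least] Od_le_d.
  apply le_trans with (inf (fun x => le (O x) x)).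
  - apply a_least, inf_prefixpoints_fixpoint.
  - apply inf_lb, Od_le_d.
Qed.

End LeastFixpoint.

Section Morphism.

Variables L K : complete_lattice.
Variable f : L -> K.
Hypothesis f_morphism : lattice_morphism f.

Lemma lattice_morphism_monotone (x y : L) : le x y -> le (f x) (f y).
Proof.
  intros x_le_y.
  set (X := fun z => z = x \/ z = y).
  assert (sup_X : sup X = y).
  { apply le_antisym.
    - apply sup_least. intros z [-> | ->]; [exact x_le_y | apply le_refl].
    - apply sup_ub. right. reflexivity. }
  destruct (f_morphism X) as [f_sup _].
  rewrite sup_X in f_sup. rewrite f_sup.
  apply sup_ub. exists x. split; [left |]; reflexivity.
Qed.

Lemma lattice_morphism_sup_fibre (y : K) :
  (exists x, f x = y) -> f (sup (fun x => f x = y)) = y.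
Proof.
  intros [x0 fx0].
  destruct (f_morphism (fun x => f x = y)) as [f_sup _].
  rewrite f_sup. apply le_antisym.
  - apply sup_least. intros z [x [fx <-]]. rewrite fx. apply le_refl.
  - apply sup_ub. exists x0. split; assumption.
Qed.

End Morphism.

Theorem lemmaA2 (L K : complete_lattice) (f : L -> K) (O : L -> L) (Of : K -> K) :
  lattice_morphism f -> surjective f ->
  respects O f -> is_projection O f Of ->
  monotone O -> monotone Of ->
  forall a : L, is_lfp O a -> is_lfp Of (f a).
Proof.
  intros f_morphism f_surj _ Of_proj O_monotone _ a a_lfp.
  split.
  - rewrite Of_proj. destruct a_lfp as [Oa _]. rewrite Oa. reflexivity.
  - intros y Of_y.
    set (d := sup (fun x => f x = y)).
    assert (fd : f d = y) by apply (lattice_morphism_sup_fibre _ _ f f_morphism y (f_surj y)).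
    assert (Od_le_d : le (O d) d).
    { apply sup_ub. rewrite <- Of_proj, fd. exact Of_y. }
    rewrite <- fd.
    apply lattice_morphism_monotone; [exact f_morphism |].
    apply (lfp_le_prefixpoint L O O_monotone a d a_lfp Od_le_d).
Qed.
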